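(* Let $f(z)=z+a_2z^2+a_3z^3+\cdots$ be analytic on $\mathbb{D}$, and set $a_1=1$. Let $c_{j,k}$ ($j,k\ge0$) be its Grunsky coefficients. Then for all $j\ge0$ and $k\ge1$, $$c_{j,k}=\sum_{l=1}^{k-1}\frac{l}{k}a_{k-l}c_{j+1,l}-\sum_{m=1}^{j}a_{m+1}c_{j-m,k}-\frac{a_{j+k+1}}{k}.$$
   Context: $\mathbb{D}=\{z\in\mathbb{C}:|z|<1\}$. The Grunsky coefficients $c_{j,k}$ of $f$ are defined by the expansion $\log\frac{f(z)-f(w)}{z-w}=-\sum_{j,k=0}^\infty c_{j,k}z^jw^k$, valid for $|z|,|w|<\varepsilon$ with $\varepsilon>0$ small enough (the branch of the logarithm taking the value $0$ at $z=w=0$). *)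

From Stdlib Require Import Reals.
From Coquelicot Require Import Coquelicot.
Open Scope R_scope.

Definition cexp (z : C) : C :=
  (exp (Re z) * cos (Im z), exp (Re z) * sin (Im z)).

Definition taylor_on_disc (a : nat -> C) (f : C -> C) : Prop :=
  forall z : C, Cmod z < 1 -> is_series (fun n => (a n * z ^ n)%C) (f z).

(* c are the Grunsky coefficients of f:
   log((f z - f w)/(z - w)) = - sum_{j,k} c_{j,k} z^j w^k for |z|,|w| < eps,
   with the branch of log vanishing at z = w = 0.  The logarithm is
   expressed through its defining property: the (absolutely convergent)
   double power series S(z,w) = - sum c_{j,k} z^j w^k satisfies
   exp(S) = (f z - f w)/(z - w), and S(0,0) = -c_{0,0} = 0 (branch). *)
Definition grunsky_coeffs (f : C -> C) (c : nat -> nat -> C) : Prop :=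
  c 0%nat 0%nat = RtoC 0 /\
  exists eps : R, 0 < eps /\
    forall z w : C, Cmod z < eps -> Cmod w < eps -> z <> w ->
      (forall j, ex_series (fun k => Cmod (c j k) * Cmod z ^ j * Cmod w ^ k)) /\
      ex_series (fun j => Series (fun k => Cmod (c j k) * Cmod z ^ j * Cmod w ^ k)) /\
      exists (s : nat -> C) (L : C),
        (forall j, is_series (fun k => (c j k * z ^ j * w ^ k)%C) (s j)) /\
        is_series s L /\
        cexp (Copp L) = ((f z - f w) / (z - w))%C.

(* For non-real [z] and real [t], [L(z, t) = sum_k (sum_j c_{j,k} z^j) t^k] is a convergent
   power series in [t] with [f z - f t = (z - t) exp (- L(z, t))].  Differentiating in [t] gives
   [(f z - f t) ∂_t L = f'(t) - (f z - f t) / (z - t)], an identity of power series in [t], so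
   each of its coefficients vanishes by the identity theorem.  Every such coefficient is itself
   a power series in [z] that vanishes on the non-real points, hence identically; the
   coefficient of [t^(k-1) z^(j+1)] is [k] times the difference of the two sides of the
   recursion. *)

From Stdlib Require Import Reals Lra Lia.
From Coquelicot Require Import Coquelicot.
Open Scope R_scope.

(* Coquelicot's generic operations leave equalities typed in a structure carrier
   that [ring] does not recognise as [C]. *)
Ltac C_eq := match goal with |- ?x = ?y => change (@eq C x y) end.
Ltac Cring := C_eq; ring.

(** * Complex series *)

Lemma is_series_norm_eps {K : AbsRing} {V : NormedModule K} (a : nat -> V) (l : V) :
  is_series a l <-> forall eps, 0 < eps ->
    exists N, forall n, (N <= n)%nat -> norm (minus (sum_n a n) l) < eps.
Proof.
  unfold is_series. rewrite (filterlim_locally (sum_n a) l). split.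
  - intros H eps Heps.
    assert (Hk : 0 < eps / norm_factor (V := V)).
    { apply Rdiv_lt_0_compat; [exact Heps | apply norm_factor_gt_0]. }
    destruct (H (mkposreal _ Hk)) as [N HN]. exists N. intros n Hn.
    specialize (HN n Hn). apply norm_compat2 in HN. simpl in HN.
    replace eps with (norm_factor (V := V) * (eps / norm_factor (V := V))); [exact HN |].
    field. apply Rgt_not_eq, norm_factor_gt_0.
  - intros H eps. destruct (H eps (cond_pos eps)) as [N HN].
    exists N. intros n Hn. apply norm_compat1, HN, Hn.
Qed.

Lemma is_series_C_eps (a : nat -> C) (l : C) :
  is_series a l <-> forall eps, 0 < eps ->
    exists N, forall n, (N <= n)%nat -> Cmod (sum_n a n - l) < eps.
Proof. exact (is_series_norm_eps (K := C_AbsRing) (V := C_NormedModule) a l). Qed.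

Lemma is_series_R_eps (a : nat -> R) (l : R) :
  is_series a l <-> forall eps, 0 < eps ->
    exists N, forall n, (N <= n)%nat -> Rabs (sum_n a n - l) < eps.
Proof. exact (is_series_norm_eps (K := R_AbsRing) (V := R_NormedModule) a l). Qed.

Lemma is_series_C_unique (a : nat -> C) (l1 l2 : C) :
  is_series a l1 -> is_series a l2 -> l1 = l2.
Proof. exact (filterlim_locally_unique _ _ _). Qed.

Lemma is_series_Cplus (a b : nat -> C) (la lb : C) :
  is_series a la -> is_series b lb -> is_series (fun n => a n + b n)%C (la + lb)%C.
Proof. exact (is_series_plus (K := C_AbsRing) (V := C_NormedModule) a b la lb). Qed.

Lemma is_series_Cminus (a b : nat -> C) (la lb : C) :
  is_series a la -> is_series b lb -> is_series (fun n => a n - b n)%C (la - lb)%C.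
Proof. exact (is_series_minus (K := C_AbsRing) (V := C_NormedModule) a b la lb). Qed.

Lemma is_series_Cmult_l (x : C) (a : nat -> C) (l : C) :
  is_series a l -> is_series (fun n => x * a n)%C (x * l)%C.
Proof. exact (is_series_scal_l (K := C_AbsRing) (V := C_NormedModule) x a l). Qed.

Lemma is_series_Cmult_r (x : C) (a : nat -> C) (l : C) :
  is_series a l -> is_series (fun n => a n * x)%C (l * x)%C.
Proof.
  intros H. rewrite Cmult_comm.
  eapply is_series_ext; [| exact (is_series_Cmult_l x a l H)].
  intros n. apply Cmult_comm.
Qed.

Lemma is_series_C_incr_1 (a : nat -> C) (l : C) :
  is_series a l -> is_series (fun n => a (S n)) (l - a O)%C.
Proof.
  intros H. apply (is_series_incr_1 (K := C_AbsRing) (V := C_NormedModule)).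
  match goal with |- is_series _ ?x => replace x with l; [exact H |] end.
  change plus with Cplus. simpl. Cring.
Qed.

Lemma is_series_C_decr_1 (a : nat -> C) (l : C) :
  is_series (fun n => a (S n)) l -> is_series a (a O + l)%C.
Proof.
  intros H. apply (is_series_decr_1 (K := C_AbsRing) (V := C_NormedModule)).
  match goal with |- is_series _ ?x => replace x with l; [exact H |] end.
  change plus with Cplus. change opp with Copp. simpl. Cring.
Qed.

Lemma sum_n_Cmult_r (u : nat -> C) (x : C) (n : nat) :
  (sum_n u n * x)%C = sum_n (fun k => u k * x)%C n.
Proof. exact (eq_sym (sum_n_mult_r (K := C_Ring) x u n)). Qed.

Lemma sum_n_m_Cmult_l (x : C) (u : nat -> C) (n m : nat) :
  sum_n_m (fun k => x * u k)%C n m = (x * sum_n_m u n m)%C.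
Proof. exact (sum_n_m_mult_l (K := C_Ring) x u n m). Qed.

Lemma sum_n_C_Re_Im (a : nat -> C) (n : nat) :
  sum_n a n = (sum_n (fun k => Re (a k)) n, sum_n (fun k => Im (a k)) n).
Proof.
  induction n as [| n IH].
  - rewrite !sum_O. apply surjective_pairing.
  - rewrite !sum_Sn, IH. reflexivity.
Qed.

Lemma im_le_Cmod (c : C) : Rabs (Im c) <= Cmod c.
Proof.
  rewrite <- (Rabs_pos_eq (Cmod c)) by apply Cmod_ge_0.
  apply Rsqr_le_abs_0. unfold Rsqr.
  pose proof (Cmod2_alt c). nra.
Qed.

Lemma Cmod_le_Re_Im (c : C) : Cmod c <= Rabs (Re c) + Rabs (Im c).
Proof.
  pose proof (Rabs_pos (Re c)). pose proof (Rabs_pos (Im c)).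
  rewrite <- (Rabs_pos_eq (Cmod c)) by apply Cmod_ge_0.
  rewrite <- (Rabs_pos_eq (Rabs (Re c) + Rabs (Im c))) by lra.
  apply Rsqr_le_abs_0. unfold Rsqr.
  pose proof (Cmod2_alt c) as E.
  rewrite <- (pow2_abs (Re c)), <- (pow2_abs (Im c)) in E.
  nra.
Qed.

Lemma is_series_Re (a : nat -> C) (l : C) :
  is_series a l -> is_series (fun n => Re (a n)) (Re l).
Proof.
  rewrite is_series_C_eps, is_series_R_eps. intros H eps Heps.
  destruct (H eps Heps) as [N HN]. exists N. intros n Hn.
  eapply Rle_lt_trans; [| exact (HN n Hn)].
  pose proof (re_le_Cmod (sum_n a n - l)%C) as Hle.
  rewrite sum_n_C_Re_Im in Hle |- *. exact Hle.
Qed.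

Lemma is_series_Im (a : nat -> C) (l : C) :
  is_series a l -> is_series (fun n => Im (a n)) (Im l).
Proof.
  rewrite is_series_C_eps, is_series_R_eps. intros H eps Heps.
  destruct (H eps Heps) as [N HN]. exists N. intros n Hn.
  eapply Rle_lt_trans; [| exact (HN n Hn)].
  pose proof (im_le_Cmod (sum_n a n - l)%C) as Hle.
  rewrite sum_n_C_Re_Im in Hle |- *. exact Hle.
Qed.

Lemma is_series_C_Re_Im (a : nat -> C) (x y : R) :
  is_series (fun n => Re (a n)) x -> is_series (fun n => Im (a n)) y ->
  is_series a (x, y).
Proof.
  rewrite is_series_C_eps, !is_series_R_eps. intros Hx Hy eps Heps.
  destruct (Hx (eps / 2)) as [N1 HN1]; [lra |].
  destruct (Hy (eps / 2)) as [N2 HN2]; [lra |].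
  exists (N1 + N2)%nat. intros n Hn.
  specialize (HN1 n ltac:(lia)). specialize (HN2 n ltac:(lia)).
  eapply Rle_lt_trans; [apply Cmod_le_Re_Im |].
  rewrite sum_n_C_Re_Im.
  change (Rabs (sum_n (fun k => Re (a k)) n - x) + Rabs (sum_n (fun k => Im (a k)) n - y) < eps).
  lra.
Qed.

(* Coquelicot's [Series] is real-valued; a complex series is summed componentwise. *)
Definition CSeries (a : nat -> C) : C :=
  (Series (fun n => Re (a n)), Series (fun n => Im (a n))).

Lemma CSeries_correct (a : nat -> C) (l : C) : is_series a l -> CSeries a = l.
Proof.
  intros H. unfold CSeries.
  rewrite (is_series_unique _ _ (is_series_Re a l H)), (is_series_unique _ _ (is_series_Im a l H)).
  destruct l. reflexivity.
Qed.

Lemma is_series_CSeries (a : nat -> C) : ex_series a -> is_series a (CSeries a).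
Proof. intros [l H]. rewrite (CSeries_correct a l H). exact H. Qed.

Lemma sum_n_nonneg (B : nat -> R) (N : nat) : (forall n, 0 <= B n) -> 0 <= sum_n B N.
Proof.
  intros HB. induction N as [| N IH]; [rewrite sum_O; apply HB |].
  rewrite sum_Sn. specialize (HB (S N)). change (0 <= sum_n B N + B (S N)). lra.
Qed.

Lemma sum_n_le_Series (B : nat -> R) (N : nat) :
  (forall n, 0 <= B n) -> ex_series B -> sum_n B N <= Series B.
Proof.
  intros HB [l Hl]. rewrite (is_series_unique _ _ Hl), sum_n_Reals.
  apply (sum_incr B N l); [apply is_series_Reals, Hl | exact HB].
Qed.

Lemma term_le_sum_n (B : nat -> R) (n N : nat) :
  (forall k, 0 <= B k) -> (n <= N)%nat -> B n <= sum_n B N.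
Proof.
  intros HB Hn. induction N as [| N IH].
  - replace n with O by lia. rewrite sum_O. lra.
  - rewrite sum_Sn. change (B n <= sum_n B N + B (S N)).
    destruct (Nat.eq_dec n (S N)) as [-> | Hne].
    + pose proof (sum_n_nonneg B N HB). lra.
    + specialize (IH ltac:(lia)). specialize (HB (S N)). lra.
Qed.

Lemma term_le_Series (B : nat -> R) (n : nat) :
  (forall k, 0 <= B k) -> ex_series B -> B n <= Series B.
Proof.
  intros HB HexB. eapply Rle_trans; [apply (term_le_sum_n B n n HB (le_n n)) |].
  exact (sum_n_le_Series B n HB HexB).
Qed.

Lemma ex_series_R_le (a b : nat -> R) :
  (forall n, 0 <= a n <= b n) -> ex_series b -> ex_series a.
Proof.
  intros Hab. apply (ex_series_le (K := R_AbsRing) (V := R_CompleteNormedModule)).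
  intros n. change (Rabs (a n) <= b n). rewrite Rabs_pos_eq; apply Hab.
Qed.

Lemma ex_series_C_le (a : nat -> C) (b : nat -> R) :
  (forall n, Cmod (a n) <= b n) -> ex_series b -> ex_series a.
Proof. exact (ex_series_le (K := C_AbsRing) (V := C_CompleteNormedModule) a b). Qed.

Lemma ex_series_Cmod (a : nat -> C) : ex_series (fun n => Cmod (a n)) -> ex_series a.
Proof. apply ex_series_C_le. intros n. apply Rle_refl. Qed.

Lemma Cmod_sum_n_le (b : nat -> C) (B : nat -> R) (N : nat) :
  (forall n, Cmod (b n) <= B n) -> Cmod (sum_n b N) <= sum_n B N.
Proof.
  intros HB. induction N as [| N IH]; [rewrite !sum_O; apply HB |].
  rewrite !sum_Sn. eapply Rle_trans; [apply Cmod_triangle |].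
  specialize (HB (S N)). change (Cmod (sum_n b N) + Cmod (b (S N)) <= sum_n B N + B (S N)). lra.
Qed.

Lemma Cmod_Series_le (b : nat -> C) (l : C) (B : nat -> R) :
  is_series b l -> (forall n, Cmod (b n) <= B n) -> ex_series B -> Cmod l <= Series B.
Proof.
  intros Hb HB HexB. apply le_epsilon. intros eps Heps.
  rewrite is_series_C_eps in Hb. destruct (Hb eps Heps) as [N HN].
  specialize (HN N (le_n N)).
  pose proof (Cmod_sum_n_le b B N HB).
  assert (HB0 : forall n, 0 <= B n) by (intros n; eapply Rle_trans; [apply Cmod_ge_0 | apply HB]).
  pose proof (sum_n_le_Series B N HB0 HexB).
  replace l with (sum_n b N - (sum_n b N - l))%C by ring.
  eapply Rle_trans; [apply Cmod_triangle |]. rewrite Cmod_opp. lra.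
Qed.

Lemma Cmod_tail_le (b : nat -> C) (l : C) (M : nat) :
  is_series b l -> ex_series (fun n => Cmod (b n)) ->
  Cmod (l - sum_n b M) <= Series (fun n => Cmod (b n)) - sum_n (fun n => Cmod (b n)) M.
Proof.
  intros Hb Hab.
  assert (Htail : is_series (fun k => b (S M + k)%nat) (l - sum_n b M)%C).
  { apply (is_series_incr_n (K := C_AbsRing) (V := C_NormedModule)); [lia |].
    match goal with |- is_series _ ?x => replace x with l; [exact Hb |] end.
    change plus with Cplus. simpl.
    match goal with |- _ = Cplus _ ?s => change s with (sum_n b M) end. ring. }
  rewrite (Series_incr_n _ (S M)), <- sum_n_Reals by (exact Hab || lia). simpl pred.
  ring_simplify.
  apply (Cmod_Series_le _ _ _ Htail); [intros; apply Rle_refl |].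
  apply (ex_series_incr_n (fun n => Cmod (b n))), Hab.
Qed.

Lemma is_series_C_bounded (b : nat -> C) (l : C) :
  is_series b l -> exists M, forall n, Cmod (b n) <= M.
Proof.
  intros H. rewrite is_series_C_eps in H. destruct (H 1 Rlt_0_1) as [N HN].
  exists (2 + sum_n (fun k => Cmod (b k)) N). intros n.
  pose proof (sum_n_nonneg (fun k => Cmod (b k)) N (fun k => Cmod_ge_0 _)).
  destruct (Nat.le_gt_cases n N) as [HnN | HNn].
  - pose proof (term_le_sum_n (fun k => Cmod (b k)) n N (fun k => Cmod_ge_0 _) HnN).
    simpl in *. lra.
  - destruct n as [| n]; [lia |].
    pose proof (HN (S n) ltac:(lia)) as H1. pose proof (HN n ltac:(lia)) as H2.
    rewrite sum_Sn in H1.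
    replace (b (S n)) with ((plus (sum_n b n) (b (S n)) - l) - (sum_n b n - l))%C
      by (change plus with Cplus; simpl; Cring).
    eapply Rle_trans; [apply Cmod_triangle |]. rewrite Cmod_opp. lra.
Qed.

(** * Double series and Cauchy products *)

Lemma is_lim_seq_sum_n_0 (u : nat -> nat -> R) (J : nat) :
  (forall j, is_lim_seq (fun M => u j M) 0) ->
  is_lim_seq (fun M => sum_n (fun j => u j M) J) 0.
Proof.
  intros Hlim. induction J as [| J IH].
  - eapply is_lim_seq_ext; [| apply (Hlim O)]. intros M. rewrite sum_O. reflexivity.
  - rewrite <- (Rplus_0_r 0).
    eapply is_lim_seq_ext; [| exact (is_lim_seq_plus' _ _ 0 0 IH (Hlim (S J)))].
    intros M. rewrite sum_Sn. reflexivity.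
Qed.

Lemma tannery (u : nat -> nat -> R) (N : nat -> R) :
  (forall j M, 0 <= u j M <= N j) -> ex_series N ->
  (forall j, is_lim_seq (fun M => u j M) 0) ->
  forall eps, 0 < eps -> exists M0, forall M, (M0 <= M)%nat -> Series (fun j => u j M) < eps.
Proof.
  intros Hu HN Hlim eps Heps.
  assert (HN0 : forall j, 0 <= N j) by (intros j; specialize (Hu j O); lra).
  pose proof (Series_correct _ HN) as HNs. rewrite is_series_R_eps in HNs.
  destruct (HNs (eps / 2) ltac:(lra)) as [J HJ]. specialize (HJ J (le_n J)).
  pose proof (is_lim_seq_sum_n_0 u J Hlim) as Hhead. apply is_lim_seq_spec in Hhead.
  destruct (Hhead (mkposreal (eps / 2) ltac:(lra))) as [M0 HM0].
  exists M0. intros M HM. specialize (HM0 M HM). simpl in HM0.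
  pose proof (sum_n_nonneg (fun j => u j M) J (fun j => proj1 (Hu j M))) as Hh0.
  rewrite Rminus_0_r, Rabs_pos_eq in HM0 by exact Hh0.
  assert (HuN : ex_series (fun j => u j M)) by (apply (ex_series_R_le _ N); auto).
  assert (Htail : Series (fun k => u (S J + k)%nat M) <= Series (fun k => N (S J + k)%nat)).
  { apply Series_le; [intros k; apply Hu | apply ex_series_incr_n, HN]. }
  rewrite (Series_incr_n _ (S J)), <- sum_n_Reals by (exact HuN || lia).
  rewrite (Series_incr_n N (S J)), <- sum_n_Reals in HJ by (exact HN || lia).
  simpl pred in *.
  assert (0 <= Series (fun k => N (S J + k)%nat)).
  { apply (Rle_trans _ (N (S J + O)%nat)); [apply HN0 |].
    apply (term_le_Series (fun k => N (S J + k)%nat)); [intros; apply HN0 | apply ex_series_incr_n, HN]. }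
  rewrite Rabs_minus_sym, Rabs_pos_eq in HJ by lra. lra.
Qed.

Lemma is_series_sum_n_C (A : nat -> nat -> C) (t : nat -> C) (M : nat) :
  (forall k, is_series (fun j => A j k) (t k)) ->
  is_series (fun j => sum_n (fun k => A j k) M) (sum_n t M).
Proof.
  intros H. induction M as [| M IH].
  - rewrite sum_O. eapply is_series_ext; [| apply (H O)]. intros j. rewrite sum_O. reflexivity.
  - rewrite sum_Sn. eapply is_series_ext; [| exact (is_series_Cplus _ _ _ _ IH (H (S M)))].
    intros j. rewrite sum_Sn. reflexivity.
Qed.

Lemma is_series_interchange (A : nat -> nat -> C) (s t : nat -> C) (L : C) :
  (forall j, ex_series (fun k => Cmod (A j k))) ->
  ex_series (fun j => Series (fun k => Cmod (A j k))) ->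
  (forall j, is_series (A j) (s j)) -> is_series s L ->
  (forall k, is_series (fun j => A j k) (t k)) ->
  is_series t L.
Proof.
  intros Hrow HN Hs HL Ht.
  set (N := fun j => Series (fun k => Cmod (A j k))).
  set (u := fun j M => N j - sum_n (fun k => Cmod (A j k)) M).
  assert (Hu : forall j M, 0 <= u j M <= N j).
  { intros j M. unfold u, N.
    pose proof (sum_n_le_Series (fun k => Cmod (A j k)) M (fun k => Cmod_ge_0 _) (Hrow j)).
    pose proof (sum_n_nonneg (fun k => Cmod (A j k)) M (fun k => Cmod_ge_0 _)). lra. }
  assert (Hlim : forall j, is_lim_seq (fun M => u j M) 0).
  { intros j. apply is_lim_seq_spec. intros eps.
    pose proof (Series_correct _ (Hrow j)) as Hj. rewrite is_series_R_eps in Hj.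
    destruct (Hj eps (cond_pos eps)) as [M0 HM0]. exists M0. intros M HM.
    unfold u, N. rewrite Rminus_0_r, Rabs_minus_sym. exact (HM0 M HM). }
  apply is_series_C_eps. intros eps Heps.
  destruct (tannery u N Hu HN Hlim eps Heps) as [M0 HM0]. exists M0. intros M HM.
  pose proof (is_series_Cminus _ _ _ _ HL (is_series_sum_n_C A t M Ht)) as Hdiff.
  rewrite <- Cmod_opp. replace (- (sum_n t M - L))%C with (L - sum_n t M)%C by ring.
  eapply Rle_lt_trans; [| exact (HM0 M HM)].
  apply (Cmod_Series_le _ _ _ Hdiff).
  - intros j. apply Cmod_tail_le; [apply Hs | apply Hrow].
  - apply (ex_series_R_le _ N); auto.
Qed.

Lemma ex_series_Re_Cmod (a : nat -> C) :
  ex_series (fun n => Cmod (a n)) -> ex_series (fun n => Rabs (Re (a n))).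
Proof. apply ex_series_R_le. intros n. split; [apply Rabs_pos | apply re_le_Cmod]. Qed.

Lemma ex_series_Im_Cmod (a : nat -> C) :
  ex_series (fun n => Cmod (a n)) -> ex_series (fun n => Rabs (Im (a n))).
Proof. apply ex_series_R_le. intros n. split; [apply Rabs_pos | apply im_le_Cmod]. Qed.

Lemma is_series_Cauchy_C (a b : nat -> C) (la lb : C) :
  is_series a la -> is_series b lb ->
  ex_series (fun n => Cmod (a n)) -> ex_series (fun n => Cmod (b n)) ->
  is_series (fun n => sum_n (fun k => a k * b (n - k)%nat)%C n) (la * lb)%C.
Proof.
  intros Ha Hb Haa Hba.
  pose proof (is_series_Re _ _ Ha) as Ra. pose proof (is_series_Im _ _ Ha) as Ia.
  pose proof (is_series_Re _ _ Hb) as Rb. pose proof (is_series_Im _ _ Hb) as Ib.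
  pose proof (ex_series_Re_Cmod _ Haa) as Raa. pose proof (ex_series_Im_Cmod _ Haa) as Iaa.
  pose proof (ex_series_Re_Cmod _ Hba) as Rba. pose proof (ex_series_Im_Cmod _ Hba) as Iba.
  replace (la * lb)%C with (Re la * Re lb - Im la * Im lb, Re la * Im lb + Im la * Re lb)
    by (destruct la, lb; reflexivity).
  apply is_series_C_Re_Im.
  - eapply is_series_ext; [| exact (is_series_minus (K := R_AbsRing) (V := R_NormedModule) _ _ _ _
        (is_series_mult _ _ _ _ Ra Rb Raa Rba) (is_series_mult _ _ _ _ Ia Ib Iaa Iba))].
    intros n. change (sum_f_R0 (fun k => Re (a k) * Re (b (n - k)%nat)) n
      - sum_f_R0 (fun k => Im (a k) * Im (b (n - k)%nat)) n
      = Re (sum_n (fun k => a k * b (n - k)%nat)%C n)).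
    rewrite <- minus_sum, sum_n_C_Re_Im. cbn [Re fst]. rewrite sum_n_Reals.
    apply sum_eq. intros k _. simpl. unfold Re, Im. ring.
  - eapply is_series_ext; [| exact (is_series_plus (K := R_AbsRing) (V := R_NormedModule) _ _ _ _
        (is_series_mult _ _ _ _ Ra Ib Raa Iba) (is_series_mult _ _ _ _ Ia Rb Iaa Rba))].
    intros n. change (sum_f_R0 (fun k => Re (a k) * Im (b (n - k)%nat)) n
      + sum_f_R0 (fun k => Im (a k) * Re (b (n - k)%nat)) n
      = Im (sum_n (fun k => a k * b (n - k)%nat)%C n)).
    rewrite <- plus_sum, sum_n_C_Re_Im. cbn [Im snd]. rewrite sum_n_Reals.
    apply sum_eq. intros k _. simpl. unfold Re, Im. ring.
Qed.

(** * Power series *)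

Lemma ex_series_geom_scal (K q : R) : Rabs q < 1 -> ex_series (fun n => K * q ^ n).
Proof.
  intros Hq. exists (K * / (1 - q)).
  apply (is_series_scal_l (K := R_AbsRing) (V := R_NormedModule)), is_series_geom, Hq.
Qed.

Definition const_coef (X : C) (m : nat) : C := match m with O => X | S _ => RtoC 0 end.

Lemma is_series_const_coef (X z : C) : is_series (fun m => const_coef X m * z ^ m)%C X.
Proof.
  assert (Hsum : forall n, sum_n (fun m => const_coef X m * z ^ m)%C n = X).
  { induction n as [| n IH]; [rewrite sum_O; simpl; ring |].
    rewrite sum_Sn, IH. simpl. rewrite Cmult_0_l. exact (plus_zero_r _). }
  apply is_series_C_eps. intros eps Heps. exists O. intros n _.
  rewrite Hsum. replace (X - X)%C with (RtoC 0) by ring. rewrite Cmod_0. exact Heps.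
Qed.

Lemma ex_series_Cmod_const_coef (X z : C) : ex_series (fun m => Cmod (const_coef X m * z ^ m)%C).
Proof.
  apply ex_series_incr_1. apply (ex_series_R_le _ (fun m => 0 * 0 ^ m)).
  - intros m. simpl. rewrite Cmult_0_l, Cmod_0. lra.
  - apply ex_series_geom_scal. rewrite Rabs_R0. lra.
Qed.

Lemma coef_bound_shift (a : nat -> C) (R0 M : R) (k : nat) : 0 < R0 ->
  (forall n, Cmod (a n) * R0 ^ n <= M) ->
  forall n, Cmod (a (k + n)%nat) * R0 ^ n <= M / R0 ^ k.
Proof.
  intros HR0 HM n. pose proof (pow_lt R0 k HR0).
  apply (Rmult_le_reg_r (R0 ^ k)); [exact H |].
  replace (M / R0 ^ k * R0 ^ k) with M by (field; lra).
  rewrite Rmult_assoc, <- pow_add, Nat.add_comm. apply HM.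
Qed.

Lemma coef_le_geom (a : nat -> C) (R0 M s : R) : 0 < R0 -> 0 <= s ->
  (forall n, Cmod (a n) * R0 ^ n <= M) ->
  forall n, Cmod (a n) * s ^ n <= M * (s / R0) ^ n.
Proof.
  intros HR0 Hs HM n. pose proof (pow_lt R0 n HR0).
  replace (Cmod (a n) * s ^ n) with (Cmod (a n) * R0 ^ n * (s / R0) ^ n)
    by (unfold Rdiv; rewrite Rpow_mult_distr, pow_inv; field; apply pow_nonzero; lra).
  apply Rmult_le_compat_r; [apply pow_le, Rdiv_le_0_compat; lra | apply HM].
Qed.

Lemma geom_ratio_lt_1 (s R0 : R) : 0 <= s < R0 -> Rabs (s / R0) < 1.
Proof.
  intros Hs. rewrite Rabs_pos_eq by (apply Rdiv_le_0_compat; lra).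
  apply (Rdiv_lt_1 s R0); lra.
Qed.

Lemma ex_series_pow_of_bounded (a : nat -> C) (r R0 M : R) : 0 <= r < R0 ->
  (forall n, Cmod (a n) * R0 ^ n <= M) -> ex_series (fun n => Cmod (a n) * r ^ n).
Proof.
  intros Hr HM. apply (ex_series_R_le _ (fun n => M * (r / R0) ^ n)).
  - intros n. split; [apply Rmult_le_pos; [apply Cmod_ge_0 | apply pow_le; lra] |].
    apply (coef_le_geom a R0); lra || exact HM.
  - apply ex_series_geom_scal, geom_ratio_lt_1, Hr.
Qed.

Lemma pseries_coef0_zero (a : nat -> C) (R0 M : R) (P : C -> Prop) :
  0 < R0 -> (forall n, Cmod (a n) * R0 ^ n <= M) ->
  (forall x, P x -> x <> RtoC 0 -> Cmod x < R0 -> is_series (fun n => a n * x ^ n)%C (RtoC 0)) ->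
  (forall d, 0 < d -> exists x, P x /\ x <> RtoC 0 /\ Cmod x < d) ->
  a O = RtoC 0.
Proof.
  intros HR0 HM Hzero Hnear. set (r := R0 / 2).
  assert (Hex : ex_series (fun n => Cmod (a (S n)) * r ^ n)).
  { apply (ex_series_pow_of_bounded _ r R0 (M / R0 ^ 1)); [unfold r; lra |].
    exact (coef_bound_shift a R0 M 1 HR0 HM). }
  set (T := Series (fun n => Cmod (a (S n)) * r ^ n)).
  assert (HT : 0 <= T).
  { eapply Rle_trans; [| apply (term_le_Series _ O)]; [| | exact Hex];
      intros; apply Rmult_le_pos; try apply Cmod_ge_0; apply pow_le; unfold r; lra. }
  (* |a 0| = |sum_{n >= 1} a n x^n| <= |x| T for the points x of P near 0 *)
  assert (Hsmall : forall d, 0 < d -> Cmod (a O) <= d * T).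
  { intros d Hd.
    destruct (Hnear (Rmin d r) ltac:(apply Rmin_pos; unfold r; lra)) as [x [HPx [Hx0 Hxd]]].
    pose proof (Rmin_l d r). pose proof (Rmin_r d r). pose proof (Cmod_ge_0 x).
    pose proof (is_series_C_incr_1 _ _ (Hzero x HPx Hx0 ltac:(unfold r in *; lra))) as Htail.
    cbv beta in Htail. replace (RtoC 0 - a O * x ^ O)%C with (- a O)%C in Htail by (simpl; ring).
    assert (Hle : Cmod (- a O) <= Series (fun n => Cmod x * (Cmod (a (S n)) * r ^ n))).
    { apply (Cmod_Series_le _ _ _ Htail).
      - intros n. rewrite Cmod_mult, Cpow_S, Cmod_mult, Cmod_pow.
        pose proof (pow_incr (Cmod x) r n ltac:(lra)).
        pose proof (Cmod_ge_0 (a (S n))).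
        replace (Cmod (a (S n)) * (Cmod x * Cmod x ^ n)) with (Cmod x * (Cmod (a (S n)) * Cmod x ^ n)) by ring.
        apply Rmult_le_compat_l; [lra |]. apply Rmult_le_compat_l; lra.
      - apply (ex_series_scal_l (K := R_AbsRing) (V := R_NormedModule) (Cmod x)), Hex. }
    rewrite Series_scal_l in Hle. fold T in Hle.
    rewrite Cmod_opp in Hle.
    eapply Rle_trans; [exact Hle |]. apply Rmult_le_compat_r; lra. }
  apply Cmod_eq_0, Rle_antisym; [| apply Cmod_ge_0].
  apply le_epsilon. intros eps Heps. rewrite Rplus_0_l.
  eapply Rle_trans; [apply (Hsmall (eps / (T + 1))); apply Rdiv_lt_0_compat; lra |].
  apply (Rmult_le_reg_r (T + 1)); [lra |].
  replace (eps / (T + 1) * T * (T + 1)) with (eps * T) by (field; lra). nra.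
Qed.

Lemma pseries_coefs_zero (a : nat -> C) (R0 M : R) (P : C -> Prop) :
  0 < R0 -> (forall n, Cmod (a n) * R0 ^ n <= M) ->
  (forall x, P x -> x <> RtoC 0 -> Cmod x < R0 -> is_series (fun n => a n * x ^ n)%C (RtoC 0)) ->
  (forall d, 0 < d -> exists x, P x /\ x <> RtoC 0 /\ Cmod x < d) ->
  forall n, a n = RtoC 0.
Proof.
  intros HR0 HM Hzero Hnear n. revert a M HM Hzero. induction n as [| n IH]; intros a M HM Hzero.
  - exact (pseries_coef0_zero a R0 M P HR0 HM Hzero Hnear).
  - pose proof (pseries_coef0_zero a R0 M P HR0 HM Hzero Hnear) as Ha0.
    apply (IH (fun k => a (S k)) (M / R0 ^ 1)); [exact (coef_bound_shift a R0 M 1 HR0 HM) |].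
    intros x HPx Hx0 HxR.
    pose proof (is_series_C_incr_1 _ _ (Hzero x HPx Hx0 HxR)) as Htail.
    cbv beta in Htail. rewrite Ha0 in Htail.
    pose proof (is_series_Cmult_l (/ x) _ _ Htail) as Hdiv.
    replace (/ x * (RtoC 0 - RtoC 0 * x ^ O))%C with (RtoC 0) in Hdiv by ring.
    eapply is_series_ext; [| exact Hdiv].
    intros k. simpl. field. exact Hx0.
Qed.

(** * Power series in a real variable with complex coefficients *)

Definition abs_conv_below (b : nat -> C) (rho : R) : Prop :=
  forall r, 0 <= r < rho -> ex_series (fun n => Cmod (b n) * r ^ n).

Lemma CV_radius_gt_of_abs_conv (p : C -> R) (b : nat -> C) (rho t : R) :
  (forall c, Rabs (p c) <= Cmod c) -> abs_conv_below b rho -> Rabs t < rho ->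
  Rbar_lt (Rabs t) (CV_radius (fun n => p (b n))).
Proof.
  intros Hp Hb Ht. set (r := (Rabs t + rho) / 2).
  pose proof (Rabs_pos t).
  assert (Hr : 0 <= r < rho) by (unfold r; lra).
  assert (Hterm : forall n, 0 <= Cmod (b n) * r ^ n)
    by (intros; apply Rmult_le_pos; [apply Cmod_ge_0 | apply pow_le; lra]).
  assert (Hle : Rbar_le r (CV_radius (fun n => p (b n)))).
  { apply (proj1 (CV_radius_bounded _)).
    exists (Series (fun n => Cmod (b n) * r ^ n)). intros n.
    eapply Rle_trans; [| apply (term_le_Series _ n Hterm (Hb r Hr))].
    rewrite Rabs_mult, (Rabs_pos_eq (r ^ n)) by (apply pow_le; lra).
    apply Rmult_le_compat_r; [apply pow_le; lra | apply Hp]. }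
  eapply Rbar_lt_le_trans; [| exact Hle]. simpl. unfold r. lra.
Qed.

Definition CPSeries (b : nat -> C) (t : R) : C :=
  (PSeries (fun n => Re (b n)) t, PSeries (fun n => Im (b n)) t).

Definition CPS_derive (b : nat -> C) (n : nat) : C := (RtoC (INR (S n)) * b (S n))%C.

Lemma is_series_pseries_R (al : nat -> R) (t : R) :
  Rbar_lt (Rabs t) (CV_radius al) -> is_series (fun n => al n * t ^ n) (PSeries al t).
Proof.
  intros H. eapply is_series_ext; [| exact (PSeries_correct _ _ (CV_radius_inside _ _ H))].
  intros n. rewrite pow_n_pow. apply Rmult_comm.
Qed.

Lemma is_series_CPSeries (b : nat -> C) (rho t : R) :
  abs_conv_below b rho -> Rabs t < rho ->
  is_series (fun n => b n * RtoC t ^ n)%C (CPSeries b t).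
Proof.
  intros Hb Ht. apply is_series_C_Re_Im.
  - eapply is_series_ext;
      [| exact (is_series_pseries_R _ _ (CV_radius_gt_of_abs_conv Re b rho t re_le_Cmod Hb Ht))].
    intros n. rewrite <- RtoC_pow, re_scal_r. reflexivity.
  - eapply is_series_ext;
      [| exact (is_series_pseries_R _ _ (CV_radius_gt_of_abs_conv Im b rho t im_le_Cmod Hb Ht))].
    intros n. rewrite <- RtoC_pow, im_scal_r. reflexivity.
Qed.

Lemma abs_conv_below_derive (b : nat -> C) (rho : R) :
  abs_conv_below b rho -> abs_conv_below (CPS_derive b) rho.
Proof.
  intros Hb r Hr.
  assert (Hrad : forall p : C -> R, (forall c, Rabs (p c) <= Cmod c) ->
    (forall x y, p (RtoC x * y)%C = x * p y) ->
    ex_series (fun n => Rabs (p (CPS_derive b n) * r ^ n))).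
  { intros p Hp Hlin.
    apply (ex_series_ext (fun n => Rabs (PS_derive (fun k => p (b k)) n * r ^ n))); [| apply CV_disk_inside].
    - intros n. unfold CPS_derive, PS_derive. rewrite Hlin. reflexivity.
    - rewrite CV_radius_derive. apply (CV_radius_gt_of_abs_conv p b rho); [exact Hp | exact Hb |].
      rewrite Rabs_pos_eq; lra. }
  pose proof (Hrad Re re_le_Cmod re_scal_l) as [lRe HRe].
  pose proof (Hrad Im im_le_Cmod im_scal_l) as [lIm HIm].
  apply (ex_series_R_le _ (fun n => Rabs (Re (CPS_derive b n) * r ^ n) + Rabs (Im (CPS_derive b n) * r ^ n))).
  - intros n. split; [apply Rmult_le_pos; [apply Cmod_ge_0 | apply pow_le; lra] |].
    rewrite !Rabs_mult, (Rabs_pos_eq (r ^ n)) by (apply pow_le; lra).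
    rewrite <- Rmult_plus_distr_r. apply Rmult_le_compat_r; [apply pow_le; lra | apply Cmod_le_Re_Im].
  - exists (lRe + lIm). exact (is_series_plus (K := R_AbsRing) (V := R_NormedModule) _ _ _ _ HRe HIm).
Qed.

Definition is_derive_C (g : R -> C) (t : R) (d : C) : Prop :=
  is_derive (fun s => Re (g s)) t (Re d) /\ is_derive (fun s => Im (g s)) t (Im d).

Lemma is_derive_C_CPSeries (b : nat -> C) (rho t : R) :
  abs_conv_below b rho -> Rabs t < rho ->
  is_derive_C (CPSeries b) t (CPSeries (CPS_derive b) t).
Proof.
  intros Hb Ht. split.
  - replace (Re (CPSeries (CPS_derive b) t)) with (PSeries (PS_derive (fun n => Re (b n))) t).
    + apply is_derive_PSeries, (CV_radius_gt_of_abs_conv Re b rho); [exact re_le_Cmod | exact Hb | exact Ht].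
    + apply PSeries_ext. intros n. unfold CPS_derive, PS_derive. rewrite re_scal_l. reflexivity.
  - replace (Im (CPSeries (CPS_derive b) t)) with (PSeries (PS_derive (fun n => Im (b n))) t).
    + apply is_derive_PSeries, (CV_radius_gt_of_abs_conv Im b rho); [exact im_le_Cmod | exact Hb | exact Ht].
    + apply PSeries_ext. intros n. unfold CPS_derive, PS_derive. rewrite im_scal_l. reflexivity.
Qed.

Lemma is_derive_C_unique_loc (g h : R -> C) (t : R) (d e : C) :
  locally t (fun s => g s = h s) -> is_derive_C g t d -> is_derive_C h t e -> d = e.
Proof.
  intros Hloc [HgRe HgIm] [HhRe HhIm].
  apply (is_derive_ext_loc _ (fun s => Re (h s))) in HgRe;
    [| eapply filter_imp; [| exact Hloc]; intros s Hs; rewrite Hs; reflexivity].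
  apply (is_derive_ext_loc _ (fun s => Im (h s))) in HgIm;
    [| eapply filter_imp; [| exact Hloc]; intros s Hs; rewrite Hs; reflexivity].
  apply injective_projections; [change (Re d = Re e) | change (Im d = Im e)].
  - rewrite <- (is_derive_unique _ _ _ HgRe). exact (is_derive_unique _ _ _ HhRe).
  - rewrite <- (is_derive_unique _ _ _ HgIm). exact (is_derive_unique _ _ _ HhIm).
Qed.

Lemma is_derive_C_sub_cexp (w : C) (U V : R -> R) (z : C) (t : R) (d : C) :
  is_derive U t (Re d) -> is_derive V t (Im d) ->
  is_derive_C (fun s => w - (z - RtoC s) * cexp (- (U s, V s)))%C t
    (cexp (- (U t, V t)) + (z - RtoC t) * cexp (- (U t, V t)) * d)%C.
Proof.
  destruct d as [dU dV]. simpl. intros HU HV.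
  assert (EU : ex_derive U t) by (eexists; exact HU).
  assert (EV : ex_derive V t) by (eexists; exact HV).
  rewrite <- (is_derive_unique _ _ _ HU), <- (is_derive_unique _ _ _ HV).
  destruct w as [u v], z as [x y]. unfold cexp.
  split; simpl; auto_derive; auto;
    change (fun s => U s) with U; change (fun s => V s) with V; ring.
Qed.

Lemma ex_series_Cmod_CPSeries (b : nat -> C) (rho t : R) :
  abs_conv_below b rho -> Rabs t < rho -> ex_series (fun n => Cmod (b n * RtoC t ^ n)%C).
Proof.
  intros Hb Ht. eapply ex_series_ext; [| exact (Hb (Rabs t) (conj (Rabs_pos t) Ht))].
  intros n. rewrite Cmod_mult, Cmod_pow, Cmod_R. reflexivity.
Qed.

(** * The Taylor series of f *)

Section Taylor.

Variables (a : nat -> C) (f : C -> C).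
Hypothesis ha0 : a O = RtoC 0.
Hypothesis hf : taylor_on_disc a f.

Lemma taylor_coef_bound (R1 : R) : 0 <= R1 < 1 -> exists M, forall n, Cmod (a n) * R1 ^ n <= M.
Proof.
  intros HR1. assert (H1 : Cmod (RtoC R1) < 1) by (rewrite Cmod_R, Rabs_pos_eq; lra).
  destruct (is_series_C_bounded _ _ (hf _ H1)) as [M HM]. exists M. intros n.
  specialize (HM n). rewrite Cmod_mult, Cmod_pow, Cmod_R, Rabs_pos_eq in HM by lra. exact HM.
Qed.

Lemma taylor_abs_conv : abs_conv_below a 1.
Proof.
  intros r Hr. destruct (taylor_coef_bound ((r + 1) / 2) ltac:(lra)) as [M HM].
  apply (ex_series_pow_of_bounded a r ((r + 1) / 2) M); [lra | exact HM].
Qed.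

Lemma f_on_reals (t : R) : Rabs t < 1 -> f (RtoC t) = CPSeries a t.
Proof.
  intros Ht. apply (is_series_C_unique (fun n => a n * RtoC t ^ n)%C).
  - apply hf. rewrite Cmod_R. exact Ht.
  - exact (is_series_CPSeries a 1 t taylor_abs_conv Ht).
Qed.

(* Coefficients of [f z - f t] as a power series in [t]. *)
Definition diff_coef (z : C) (n : nat) : C :=
  match n with O => f z | S m => (- a (S m))%C end.

Lemma diff_coef_series (z t : C) : Cmod t < 1 ->
  is_series (fun n => diff_coef z n * t ^ n)%C (f z - f t)%C.
Proof.
  intros Ht. eapply is_series_ext; [| exact (is_series_Cminus _ _ _ _ (is_series_const_coef (f z) t) (hf t Ht))].
  intros [| n]; simpl; [rewrite ha0 |]; ring.
Qed.

Lemma ex_series_Cmod_diff_coef (z t : C) : Cmod t < 1 ->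
  ex_series (fun n => Cmod (diff_coef z n * t ^ n)%C).
Proof.
  intros Ht. apply ex_series_incr_1.
  pose proof (proj1 (ex_series_incr_1 _) (taylor_abs_conv (Cmod t) (conj (Cmod_ge_0 t) Ht))) as Habs.
  eapply ex_series_ext; [| exact Habs].
  intros n. simpl. rewrite !Cmod_mult, Cmod_opp, Cmod_pow. reflexivity.
Qed.

(* Coefficients of the difference quotient [(f z - f t) / (z - t)] as a power series in [t]. *)
Definition quot_coef (z : C) (n : nat) : C := CSeries (fun p => a (S n + p) * z ^ p)%C.

Lemma quot_coef_term_le (z : C) (R1 M : R) (n p : nat) : Cmod z <= R1 -> 0 < R1 ->
  (forall m, Cmod (a m) * R1 ^ m <= M) ->
  Cmod (a (S n + p)%nat * z ^ p)%C <= M / R1 ^ S n * (Cmod z / R1) ^ p.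
Proof.
  intros Hz HR1 HM. rewrite Cmod_mult, Cmod_pow.
  apply (coef_le_geom (fun p => a (S n + p)%nat) R1); [exact HR1 | apply Cmod_ge_0 |].
  exact (coef_bound_shift a R1 M (S n) HR1 HM).
Qed.

Lemma is_series_quot_coef (z : C) (n : nat) : Cmod z < 1 ->
  is_series (fun p => a (S n + p) * z ^ p)%C (quot_coef z n).
Proof.
  intros Hz. apply is_series_CSeries. pose proof (Cmod_ge_0 z).
  set (R1 := (Cmod z + 1) / 2).
  destruct (taylor_coef_bound R1 ltac:(unfold R1; lra)) as [M HM].
  apply (ex_series_C_le _ (fun p => M / R1 ^ S n * (Cmod z / R1) ^ p)).
  - intros p. apply quot_coef_term_le; [unfold R1; lra | unfold R1; lra | exact HM].
  - apply ex_series_geom_scal, geom_ratio_lt_1. unfold R1. lra.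
Qed.

Lemma quot_coef_0 (z : C) : Cmod z < 1 -> (z * quot_coef z 0 = f z)%C.
Proof.
  intros Hz. apply (is_series_C_unique (fun p => a (S p) * z ^ S p)%C).
  - eapply is_series_ext; [| exact (is_series_Cmult_l z _ _ (is_series_quot_coef z 0 Hz))].
    intros p. simpl. ring.
  - replace (f z) with (f z - a O * z ^ O)%C by (rewrite ha0; ring).
    exact (is_series_C_incr_1 _ _ (hf z Hz)).
Qed.

Lemma quot_coef_S (z : C) (n : nat) : Cmod z < 1 ->
  (z * quot_coef z (S n) = quot_coef z n - a (S n))%C.
Proof.
  intros Hz. apply (is_series_C_unique (fun p => a (S n + S p) * z ^ S p)%C).
  - eapply is_series_ext; [| exact (is_series_Cmult_l z _ _ (is_series_quot_coef z (S n) Hz))].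
    intros p. rewrite Nat.add_succ_r. simpl. ring.
  - replace (a (S n)) with (a (S n + O)%nat * z ^ O)%C by (rewrite Nat.add_0_r; simpl; ring).
    exact (is_series_C_incr_1 _ _ (is_series_quot_coef z n Hz)).
Qed.

Lemma ex_series_quot_coef (z t : C) : Cmod z < 1 -> Cmod t < 1 ->
  ex_series (fun n => quot_coef z n * t ^ n)%C.
Proof.
  intros Hz Ht. pose proof (Cmod_ge_0 z). pose proof (Cmod_ge_0 t).
  set (R1 := (Rmax (Cmod z) (Cmod t) + 1) / 2).
  assert (HR1 : Cmod z < R1 /\ Cmod t < R1 /\ R1 < 1).
  { pose proof (Rmax_l (Cmod z) (Cmod t)). pose proof (Rmax_r (Cmod z) (Cmod t)).
    pose proof (Rmax_lub_lt _ _ _ Hz Ht). unfold R1. lra. }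
  destruct HR1 as [HzR [HtR HR1]].
  destruct (taylor_coef_bound R1 ltac:(lra)) as [M HM].
  assert (Hq : Cmod z / R1 < 1) by (apply (Rdiv_lt_1 (Cmod z) R1); lra).
  assert (Hquot : forall n, Cmod (quot_coef z n) <= M / R1 ^ S n / (1 - Cmod z / R1)).
  { intros n.
    replace (M / R1 ^ S n / (1 - Cmod z / R1)) with (Series (fun p => M / R1 ^ S n * (Cmod z / R1) ^ p))
      by (rewrite Series_scal_l, Series_geom by (apply geom_ratio_lt_1; lra); reflexivity).
    apply (Cmod_Series_le _ _ _ (is_series_quot_coef z n Hz)).
    - intros p. apply quot_coef_term_le; [lra | lra | exact HM].
    - apply ex_series_geom_scal, geom_ratio_lt_1. lra. }
  apply (ex_series_C_le _ (fun n => M / R1 / (1 - Cmod z / R1) * (Cmod t / R1) ^ n)).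
  - intros n. rewrite Cmod_mult, Cmod_pow.
    eapply Rle_trans; [apply Rmult_le_compat_r; [apply pow_le; lra | apply Hquot] |].
    right. unfold Rdiv. rewrite Rpow_mult_distr, pow_inv. simpl. field.
    split; [apply pow_nonzero |]; lra.
  - apply ex_series_geom_scal, geom_ratio_lt_1. lra.
Qed.

Lemma quot_coef_series (z t : C) : Cmod z < 1 -> Cmod t < 1 -> z <> t ->
  is_series (fun n => quot_coef z n * t ^ n)%C ((f z - f t) / (z - t))%C.
Proof.
  intros Hz Ht Hzt.
  destruct (ex_series_quot_coef z t Hz Ht) as [l Hl]. change C in l.
  (* [(z - t) l] has the coefficients of [f z - f t] *)
  assert (Hzl : (z * l - t * l = f z - f t)%C).
  { apply (is_series_C_unique (fun n => diff_coef z n * t ^ n)%C); [| exact (diff_coef_series z t Ht)].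
    assert (Htl : is_series (fun n => match n with O => RtoC 0 | S m => quot_coef z m * t ^ S m end)%C (t * l)%C).
    { replace (t * l)%C with (RtoC 0 + t * l)%C by ring. apply is_series_C_decr_1.
      eapply is_series_ext; [| exact (is_series_Cmult_l t _ _ Hl)]. intros n. simpl. ring. }
    eapply is_series_ext; [| exact (is_series_Cminus _ _ _ _ (is_series_Cmult_l z _ _ Hl) Htl)].
    intros [| m]; simpl.
    - rewrite <- (quot_coef_0 z Hz). ring.
    - replace (z * (quot_coef z (S m) * (t * t ^ m)) - quot_coef z m * (t * t ^ m))%C
        with ((z * quot_coef z (S m) - quot_coef z m) * (t * t ^ m))%C by ring.
      rewrite (quot_coef_S z m Hz). ring. }
  replace ((f z - f t) / (z - t))%C with l; [exact Hl |].
  rewrite <- Hzl. field. intros E. apply Hzt.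
  replace z with (z - t + t)%C by ring. rewrite E. ring.
Qed.

End Taylor.

(** * The differential identity for the Grunsky series *)

Definition grunsky_at (f : C -> C) (c : nat -> nat -> C) (z w : C) : Prop :=
  (forall j, ex_series (fun k => Cmod (c j k) * Cmod z ^ j * Cmod w ^ k)) /\
  ex_series (fun j => Series (fun k => Cmod (c j k) * Cmod z ^ j * Cmod w ^ k)) /\
  exists (s : nat -> C) (L : C),
    (forall j, is_series (fun k => (c j k * z ^ j * w ^ k)%C) (s j)) /\
    is_series s L /\
    cexp (Copp L) = ((f z - f w) / (z - w))%C.

Lemma RtoC_neq_nonreal (z : C) (t : R) : Im z <> 0 -> z <> RtoC t.
Proof. intros Hz E. apply Hz. rewrite E. reflexivity. Qed.

Lemma locally_Rabs_lt (t rho : R) : Rabs t < rho -> locally t (fun s => Rabs s < rho).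
Proof.
  intros Ht. assert (Hd : 0 < rho - Rabs t) by lra.
  exists (mkposreal _ Hd). intros s Hs. change (Rabs (s - t) < rho - Rabs t) in Hs.
  pose proof (Rabs_triang_inv s t). lra.
Qed.

Lemma real_points_near_0 (d : R) : 0 < d -> exists x : C, Im x = 0 /\ x <> RtoC 0 /\ Cmod x < d.
Proof.
  intros Hd. exists (RtoC (d / 2)). repeat split.
  - intros E. apply RtoC_inj in E. lra.
  - rewrite Cmod_R, Rabs_pos_eq; lra.
Qed.

Lemma imag_points_near_0 (d : R) : 0 < d -> exists x : C, Re x = 0 /\ x <> RtoC 0 /\ Cmod x < d.
Proof.
  intros Hd. exists (RtoC (d / 2) * Ci)%C. repeat split.
  - simpl. ring.
  - intros E. apply (f_equal Im) in E. simpl in E. lra.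
  - rewrite Cmod_mult, Cmod_Ci, Cmod_R, Rabs_pos_eq; lra.
Qed.

Lemma point_near_0_off (z : C) (eps : R) : 0 < eps ->
  exists w, w <> z /\ w <> RtoC 0 /\ Cmod w < eps.
Proof.
  intros Heps. destruct (real_points_near_0 eps Heps) as [x [Hx [Hx0 Hxe]]].
  destruct (imag_points_near_0 eps Heps) as [y [Hy [Hy0 Hye]]].
  destruct (Ceq_dec z x) as [-> | Hzx]; [| exists x; auto].
  exists y. repeat split; auto.
  intros E. apply Hy0. apply injective_projections; [exact Hy |].
  change (Im y = 0). rewrite E. exact Hx.
Qed.

Section Grunsky.

Variables (a : nat -> C) (f : C -> C) (c : nat -> nat -> C) (rho : R).
Hypothesis ha0 : a O = RtoC 0.
Hypothesis hf : taylor_on_disc a f.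
Hypothesis Hrho : 0 < rho <= 1.
Hypothesis hc : forall z w, Cmod z < rho -> Cmod w < rho -> z <> w -> grunsky_at f c z w.

Lemma grunsky_term_le_row (z w : C) (j k : nat) : grunsky_at f c z w ->
  Cmod (c j k) * Cmod z ^ j * Cmod w ^ k <= Series (fun k => Cmod (c j k) * Cmod z ^ j * Cmod w ^ k).
Proof.
  intros [Hrow _]. apply (term_le_Series (fun k => Cmod (c j k) * Cmod z ^ j * Cmod w ^ k)); [| apply Hrow].
  intros. repeat apply Rmult_le_pos; try apply pow_le; apply Cmod_ge_0.
Qed.

Lemma ex_series_grunsky_col (z : C) (k : nat) : Cmod z < rho ->
  ex_series (fun j => Cmod (c j k) * Cmod z ^ j).
Proof.
  intros Hz. destruct (point_near_0_off z rho ltac:(lra)) as [w [Hwz [Hw0 Hw]]].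
  pose proof (hc z w Hz Hw (not_eq_sym Hwz)) as Hg.
  assert (Hwk : 0 < Cmod w ^ k) by (apply pow_lt, Cmod_gt_0, Hw0).
  apply (ex_series_R_le _ (fun j => Series (fun k => Cmod (c j k) * Cmod z ^ j * Cmod w ^ k) * / Cmod w ^ k)).
  - intros j. split; [apply Rmult_le_pos; [apply Cmod_ge_0 | apply pow_le, Cmod_ge_0] |].
    apply (Rmult_le_reg_r (Cmod w ^ k)); [exact Hwk |].
    match goal with |- _ <= ?S * / ?W * ?W => replace (S * / W * W) with S by (field; lra) end.
    apply (grunsky_term_le_row z w j k Hg).
  - apply ex_series_scal_r, (proj1 (proj2 Hg)).
Qed.

(* [grunsky_col z k] is the coefficient of [w ^ k] in [- log ((f z - f w) / (z - w))]. *)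
Definition grunsky_col (z : C) (k : nat) : C := CSeries (fun j => c j k * z ^ j)%C.

Lemma is_series_grunsky_col (z : C) (k : nat) : Cmod z < rho ->
  is_series (fun j => c j k * z ^ j)%C (grunsky_col z k).
Proof.
  intros Hz. apply is_series_CSeries, ex_series_Cmod.
  eapply ex_series_ext; [| exact (ex_series_grunsky_col z k Hz)].
  intros j. rewrite Cmod_mult, Cmod_pow. reflexivity.
Qed.

Lemma grunsky_col_abs_conv (z : C) : Im z <> 0 -> Cmod z < rho ->
  abs_conv_below (grunsky_col z) rho.
Proof.
  intros Hi Hz r Hr. set (r1 := (r + rho) / 2).
  assert (Hg : grunsky_at f c z (RtoC r1)).
  { apply hc; [exact Hz | rewrite Cmod_R, Rabs_pos_eq; unfold r1; lra | apply RtoC_neq_nonreal, Hi]. }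
  apply (ex_series_pow_of_bounded _ r r1
    (Series (fun j => Series (fun k => Cmod (c j k) * Cmod z ^ j * Cmod (RtoC r1) ^ k))));
    [unfold r1; lra |].
  intros k. replace (Cmod (grunsky_col z k) * r1 ^ k) with (Cmod (grunsky_col z k * RtoC r1 ^ k))
    by (rewrite Cmod_mult, Cmod_pow, Cmod_R, Rabs_pos_eq; [reflexivity | unfold r1; lra]).
  apply (Cmod_Series_le _ _ _ (is_series_Cmult_r _ _ _ (is_series_grunsky_col z k Hz))).
  - intros j. rewrite !Cmod_mult, !Cmod_pow. exact (grunsky_term_le_row z (RtoC r1) j k Hg).
  - exact (proj1 (proj2 Hg)).
Qed.

Lemma grunsky_exp_identity (z : C) (t : R) : Im z <> 0 -> Cmod z < rho -> Rabs t < rho ->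
  cexp (- CPSeries (grunsky_col z) t) = ((f z - f (RtoC t)) / (z - RtoC t))%C.
Proof.
  intros Hi Hz Ht.
  destruct (hc z (RtoC t) Hz ltac:(rewrite Cmod_R; exact Ht) (RtoC_neq_nonreal z t Hi))
    as [Hrow [HN [s [L [Hs [HL HE]]]]]].
  replace (CPSeries (grunsky_col z) t) with L; [exact HE |].
  apply (is_series_C_unique (fun k => grunsky_col z k * RtoC t ^ k)%C);
    [| exact (is_series_CPSeries _ rho t (grunsky_col_abs_conv z Hi Hz) Ht)].
  apply (is_series_interchange (fun j k => c j k * z ^ j * RtoC t ^ k)%C s _ L).
  - intros j. eapply ex_series_ext; [| apply (Hrow j)].
    intros k. rewrite !Cmod_mult, !Cmod_pow. reflexivity.
  - eapply ex_series_ext; [| exact HN]. intros j. apply Series_ext.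
    intros k. rewrite !Cmod_mult, !Cmod_pow. reflexivity.
  - exact Hs.
  - exact HL.
  - intros k. exact (is_series_Cmult_r _ _ _ (is_series_grunsky_col z k Hz)).
Qed.

(* Differentiating [f z - f t = (z - t) exp (- L(z, t))] in the real variable [t]. *)
Lemma grunsky_ode (z : C) (t : R) : Im z <> 0 -> Cmod z < rho -> Rabs t < rho ->
  ((f z - f (RtoC t)) * CPSeries (CPS_derive (grunsky_col z)) t =
   CPSeries (CPS_derive a) t - (f z - f (RtoC t)) / (z - RtoC t))%C.
Proof.
  intros Hi Hz Ht.
  pose proof (grunsky_col_abs_conv z Hi Hz) as Hcol.
  set (U := PSeries (fun n => Re (grunsky_col z n))). set (V := PSeries (fun n => Im (grunsky_col z n))).
  set (D := CPSeries (CPS_derive (grunsky_col z)) t).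
  assert (Hloc : locally t (fun s => CPSeries a s = (f z - (z - RtoC s) * cexp (- (U s, V s)))%C)).
  { eapply filter_imp; [| exact (locally_Rabs_lt t rho Ht)]. intros s Hs.
    rewrite <- (f_on_reals a f hf s) by lra.
    change (U s, V s) with (CPSeries (grunsky_col z) s). rewrite (grunsky_exp_identity z s Hi Hz Hs).
    field. apply Cminus_eq_contra, RtoC_neq_nonreal, Hi. }
  destruct (is_derive_C_CPSeries (grunsky_col z) rho t Hcol Ht) as [HU HV].
  pose proof (is_derive_C_sub_cexp (f z) U V z t D HU HV) as Hrhs.
  pose proof (is_derive_C_CPSeries a 1 t (taylor_abs_conv a f hf) ltac:(lra)) as Hlhs.
  pose proof (is_derive_C_unique_loc _ _ _ _ _ Hloc Hlhs Hrhs) as Hd.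
  rewrite Hd. change (U t, V t) with (CPSeries (grunsky_col z) t).
  rewrite (grunsky_exp_identity z t Hi Hz Ht).
  field. apply Cminus_eq_contra, RtoC_neq_nonreal, Hi.
Qed.

(* Coefficients in [t] of [(f z - f t) ∂_t L(z, t) - f'(t) + (f z - f t) / (z - t)]. *)
Definition ode_tcoef (z : C) (n : nat) : C :=
  (sum_n (fun k => diff_coef a f z (n - k) * CPS_derive (grunsky_col z) k) n
   - CPS_derive a n + quot_coef a z n)%C.

Lemma ode_tcoef_series (z : C) (t : R) : Im z <> 0 -> Cmod z < rho -> Rabs t < rho ->
  is_series (fun n => ode_tcoef z n * RtoC t ^ n)%C (RtoC 0).
Proof.
  intros Hi Hz Ht.
  assert (Ht1 : Cmod (RtoC t) < 1) by (rewrite Cmod_R; lra).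
  pose proof (abs_conv_below_derive _ _ (grunsky_col_abs_conv z Hi Hz)) as Hcol.
  pose proof (abs_conv_below_derive _ _ (taylor_abs_conv a f hf)) as Ha.
  pose proof (is_series_Cauchy_C _ _ _ _
    (is_series_CPSeries _ rho t Hcol Ht) (diff_coef_series a f ha0 hf z _ Ht1)
    (ex_series_Cmod_CPSeries _ rho t Hcol Ht) (ex_series_Cmod_diff_coef a f hf z _ Ht1)) as Hprod.
  pose proof (is_series_Cplus _ _ _ _
    (is_series_Cminus _ _ _ _ Hprod (is_series_CPSeries _ 1 t Ha ltac:(lra)))
    (quot_coef_series a f ha0 hf z _ ltac:(lra) Ht1 (RtoC_neq_nonreal z t Hi))) as Hsum.
  rewrite Cmult_comm, (grunsky_ode z t Hi Hz Ht) in Hsum.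
  replace (RtoC 0) with
    (CPSeries (CPS_derive a) t - (f z - f t) / (z - t) - CPSeries (CPS_derive a) t
     + (f z - f t) / (z - t))%C by ring.
  eapply is_series_ext; [| exact Hsum]. intros n. unfold ode_tcoef.
  assert (Hconv : sum_n (fun k => CPS_derive (grunsky_col z) k * RtoC t ^ k
                                  * (diff_coef a f z (n - k) * RtoC t ^ (n - k)))%C n
     = (sum_n (fun k => diff_coef a f z (n - k) * CPS_derive (grunsky_col z) k) n * RtoC t ^ n)%C).
  { rewrite sum_n_Cmult_r. apply sum_n_ext_loc. intros k Hk.
    replace (RtoC t ^ n)%C with (RtoC t ^ k * RtoC t ^ (n - k))%C
      by (rewrite <- Cpow_add_r; f_equal; lia).
    Cring. }
  rewrite Hconv. Cring.
Qed.

Lemma ode_tcoef_zero (z : C) (n : nat) : Im z <> 0 -> Cmod z < rho -> ode_tcoef z n = RtoC 0.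
Proof.
  intros Hi Hz.
  assert (Hr : Rabs (rho / 2) < rho) by (rewrite Rabs_pos_eq; lra).
  destruct (is_series_C_bounded _ _ (ode_tcoef_series z (rho / 2) Hi Hz Hr)) as [M HM].
  apply (pseries_coefs_zero _ (rho / 2) M (fun x => Im x = 0)); [lra | | | apply real_points_near_0].
  - intros k. specialize (HM k). rewrite Cmod_mult, Cmod_pow, Cmod_R, Rabs_pos_eq in HM by lra. exact HM.
  - intros [x y] Hy _ Hx. simpl in Hy. subst y. change (x, 0) with (RtoC x) in *.
    rewrite Cmod_R in Hx. apply (ode_tcoef_series z x Hi Hz). lra.
Qed.

(* Coefficients in [z] of [diff_coef a f z n] and of [CPS_derive (grunsky_col z) k]. *)
Definition diff_zcoef (n m : nat) : C :=
  match n with O => a m | S n' => const_coef (- a (S n'))%C m end.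

Definition col_derive_zcoef (k m : nat) : C := (RtoC (INR (S k)) * c m (S k))%C.

Definition ode_coef (n m : nat) : C :=
  (sum_n (fun k => sum_n (fun i => diff_zcoef (n - k) i * col_derive_zcoef k (m - i)) m) n
   - const_coef (CPS_derive a n) m + a (S n + m)%nat)%C.

Lemma is_series_diff_zcoef (n : nat) (z : C) : Cmod z < 1 ->
  is_series (fun m => diff_zcoef n m * z ^ m)%C (diff_coef a f z n).
Proof. intros Hz. destruct n; [apply hf, Hz | apply is_series_const_coef]. Qed.

Lemma ex_series_Cmod_diff_zcoef (n : nat) (z : C) : Cmod z < 1 ->
  ex_series (fun m => Cmod (diff_zcoef n m * z ^ m)%C).
Proof.
  intros Hz. destruct n; [| apply ex_series_Cmod_const_coef].
  eapply ex_series_ext; [| exact (taylor_abs_conv a f hf (Cmod z) (conj (Cmod_ge_0 z) Hz))].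
  intros m. simpl. rewrite Cmod_mult, Cmod_pow. reflexivity.
Qed.

Lemma is_series_col_derive_zcoef (k : nat) (z : C) : Cmod z < rho ->
  is_series (fun m => col_derive_zcoef k m * z ^ m)%C (CPS_derive (grunsky_col z) k).
Proof.
  intros Hz. eapply is_series_ext; [| exact (is_series_Cmult_l _ _ _ (is_series_grunsky_col z (S k) Hz))].
  intros m. unfold col_derive_zcoef. simpl. ring.
Qed.

Lemma ex_series_Cmod_col_derive_zcoef (k : nat) (z : C) : Cmod z < rho ->
  ex_series (fun m => Cmod (col_derive_zcoef k m * z ^ m)%C).
Proof.
  intros Hz.
  eapply ex_series_ext; [| exact (ex_series_scal_l (K := R_AbsRing) (V := R_NormedModule) (INR (S k))
    _ (ex_series_grunsky_col z (S k) Hz))].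
  intros m. unfold col_derive_zcoef. rewrite !Cmod_mult, Cmod_pow, Cmod_R, Rabs_pos_eq by apply pos_INR.
  change (INR (S k) * (Cmod (c m (S k)) * Cmod z ^ m) = INR (S k) * Cmod (c m (S k)) * Cmod z ^ m).
  ring.
Qed.

Lemma ode_coef_series (n : nat) (z : C) : Cmod z < rho ->
  is_series (fun m => ode_coef n m * z ^ m)%C (ode_tcoef z n).
Proof.
  intros Hz. assert (Hz1 : Cmod z < 1) by lra.
  set (A := fun m k => sum_n (fun i => diff_zcoef (n - k) i * z ^ i
                                       * (col_derive_zcoef k (m - i) * z ^ (m - i)))%C m).
  assert (HA : forall k, is_series (fun m => A m k)
                 (diff_coef a f z (n - k) * CPS_derive (grunsky_col z) k)%C).
  { intros k.
    apply (is_series_Cauchy_C (fun i => diff_zcoef (n - k) i * z ^ i)%C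
                              (fun i => col_derive_zcoef k i * z ^ i)%C).
    - exact (is_series_diff_zcoef (n - k) z Hz1).
    - exact (is_series_col_derive_zcoef k z Hz).
    - exact (ex_series_Cmod_diff_zcoef (n - k) z Hz1).
    - exact (ex_series_Cmod_col_derive_zcoef k z Hz). }
  pose proof (is_series_Cplus _ _ _ _
    (is_series_Cminus _ _ _ _ (is_series_sum_n_C A _ n HA) (is_series_const_coef (CPS_derive a n) z))
    (is_series_quot_coef a f hf z n Hz1)) as Hsum.
  eapply is_series_ext; [| exact Hsum]. intros m. unfold ode_coef, A.
  assert (Hconv : forall k, sum_n (fun i => diff_zcoef (n - k) i * z ^ i
                                   * (col_derive_zcoef k (m - i) * z ^ (m - i)))%C m
     = (sum_n (fun i => diff_zcoef (n - k) i * col_derive_zcoef k (m - i)) m * z ^ m)%C).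
  { intros k. rewrite sum_n_Cmult_r. apply sum_n_ext_loc. intros i Hi.
    replace (z ^ m)%C with (z ^ i * z ^ (m - i))%C by (rewrite <- Cpow_add_r; f_equal; lia).
    Cring. }
  rewrite (sum_n_ext _ _ _ Hconv), <- sum_n_Cmult_r. Cring.
Qed.

Lemma ode_coef_zero (n m : nat) : ode_coef n m = RtoC 0.
Proof.
  assert (Hr : Cmod (RtoC (rho / 2)) < rho) by (rewrite Cmod_R, Rabs_pos_eq; lra).
  destruct (is_series_C_bounded _ _ (ode_coef_series n _ Hr)) as [M HM].
  apply (pseries_coefs_zero _ (rho / 2) M (fun x => Re x = 0)); [lra | | | apply imag_points_near_0].
  - intros k. specialize (HM k). rewrite Cmod_mult, Cmod_pow, Cmod_R, Rabs_pos_eq in HM by lra. exact HM.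
  - intros [x y] Hx Hx0 Hxr. simpl in Hx. subst x.
    assert (Hy : y <> 0) by (intros ->; apply Hx0; reflexivity).
    rewrite <- (ode_tcoef_zero (0, y) n Hy ltac:(lra)).
    apply ode_coef_series. lra.
Qed.

End Grunsky.

(** * Reading off the recursion *)

Lemma sum_n_first (g : nat -> C) (m : nat) : sum_n g m = (g O + sum_n_m g 1 m)%C.
Proof. unfold sum_n. rewrite (sum_n_m_Chasles g 0 0 m), sum_n_n by lia. reflexivity. Qed.

Lemma sum_n_shift (g : nat -> C) (m : nat) : sum_n g (S m) = (g O + sum_n (fun i => g (S i)) m)%C.
Proof. rewrite sum_n_first. unfold sum_n. rewrite <- sum_n_m_S. reflexivity. Qed.

Lemma sum_n_last (g : nat -> C) (n : nat) :
  sum_n g n = (sum_n_m (fun l => g (pred l)) 1 n + g n)%C.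
Proof.
  induction n as [| n IH].
  - rewrite sum_O, sum_n_m_zero by lia. change (zero : C) with (RtoC 0). Cring.
  - rewrite sum_Sn, IH, sum_n_Sm by lia. reflexivity.
Qed.

Lemma sum_n_const_coef (X : C) (Y : nat -> C) (m : nat) :
  sum_n (fun i => const_coef X i * Y i)%C m = (X * Y O)%C.
Proof.
  induction m as [| m IH]; [rewrite sum_O; reflexivity |].
  rewrite sum_Sn, IH. simpl. rewrite Cmult_0_l. exact (plus_zero_r _).
Qed.

Lemma ode_coef_succ (a : nat -> C) (c : nat -> nat -> C) (n j : nat) :
  a O = RtoC 0 -> a 1%nat = RtoC 1 ->
  ode_coef a c n (S j) =
    (- sum_n_m (fun l => a (S n - l)%nat * (RtoC (INR l) * c (S j) l)) 1 n
     + RtoC (INR (S n)) * (c j (S n) + sum_n_m (fun m => a (S m) * c (j - m)%nat (S n)) 1 j)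
     + a (S n + S j)%nat)%C.
Proof.
  intros ha0 ha1. unfold ode_coef. rewrite sum_n_last.
  (* for k < n only the constant term of [diff_zcoef (n - k)] contributes *)
  assert (Hlow : sum_n_m (fun l => sum_n (fun i => diff_zcoef a (n - pred l) i
                                         * col_derive_zcoef c (pred l) (S j - i))%C (S j)) 1 n
               = sum_n_m (fun l => - a (S n - l)%nat * (RtoC (INR l) * c (S j) l))%C 1 n).
  { apply sum_n_m_ext_loc. intros l Hl.
    replace (n - pred l)%nat with (S (n - l)) by lia. simpl diff_zcoef.
    rewrite sum_n_const_coef. unfold col_derive_zcoef.
    replace (S (pred l)) with l by lia. replace (S (n - l)) with (S n - l)%nat by lia.
    reflexivity. }
  (* for k = n the Cauchy product with [a] gives [c j] through [a 1 = 1] *)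
  assert (Htop : sum_n (fun i => diff_zcoef a (n - n) i * col_derive_zcoef c n (S j - i))%C (S j)
               = (RtoC (INR (S n)) * c j (S n)
                  + sum_n_m (fun m => a (S m) * (RtoC (INR (S n)) * c (j - m)%nat (S n))) 1 j)%C).
  { rewrite Nat.sub_diag, sum_n_shift, sum_n_first. simpl diff_zcoef. unfold col_derive_zcoef.
    rewrite ha0, ha1. replace (S j - 1)%nat with j by lia.
    rewrite (sum_n_m_ext _ (fun m => a (S m) * (RtoC (INR (S n)) * c (j - m)%nat (S n)))%C)
      by reflexivity.
    Cring. }
  rewrite Hlow, Htop. simpl const_coef.
  rewrite (sum_n_m_ext (fun l => - a (S n - l)%nat * (RtoC (INR l) * c (S j) l))%C
                       (fun l => - (1) * (a (S n - l)%nat * (RtoC (INR l) * c (S j) l)))%C)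
    by (intros l; Cring).
  rewrite (sum_n_m_ext (fun m => a (S m) * (RtoC (INR (S n)) * c (j - m)%nat (S n)))%C
                       (fun m => RtoC (INR (S n)) * (a (S m) * c (j - m)%nat (S n)))%C)
    by (intros m; Cring).
  rewrite !sum_n_m_Cmult_l. Cring.
Qed.

Lemma recursion_of_ode_coef (a : nat -> C) (c : nat -> nat -> C) (n j : nat) :
  a O = RtoC 0 -> a 1%nat = RtoC 1 -> ode_coef a c n (S j) = RtoC 0 ->
  c j (S n) =
    (sum_n_m (fun l => RtoC (INR l / INR (S n)) * a (S n - l)%nat * c (S j) l) 1 (S n - 1)
     - sum_n_m (fun m => a (S m) * c (j - m)%nat (S n)) 1 j
     - a (S (j + S n)) / RtoC (INR (S n)))%C.
Proof.
  intros ha0 ha1 H0. rewrite (ode_coef_succ a c n j ha0 ha1) in H0.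
  replace (S n - 1)%nat with n by lia. replace (S (j + S n)) with (S n + S j)%nat by lia.
  assert (HK : RtoC (INR (S n)) <> RtoC 0) by (intros E; apply RtoC_inj in E; exact (not_0_INR (S n) (Nat.neq_succ_0 n) E)).
  rewrite (sum_n_m_ext (fun l => RtoC (INR l / INR (S n)) * a (S n - l)%nat * c (S j) l)%C
                       (fun l => / RtoC (INR (S n)) * (a (S n - l)%nat * (RtoC (INR l) * c (S j) l)))%C)
    by (intros l; rewrite RtoC_div by (apply not_0_INR; lia); C_eq; field; exact HK).
  rewrite sum_n_m_Cmult_l.
  set (S1 := sum_n_m (fun l => a (S n - l)%nat * (RtoC (INR l) * c (S j) l))%C 1 n) in *.
  set (S2 := sum_n_m (fun m => a (S m) * c (j - m)%nat (S n))%C 1 j) in *.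
  set (K := RtoC (INR (S n))) in *.
  replace (c j (S n)) with
    ((- S1 + K * (c j (S n) + S2) + a (S n + S j)%nat - (- S1 + K * S2 + a (S n + S j)%nat)) / K)%C
    by (field; exact HK).
  rewrite H0. field. exact HK.
Qed.

Theorem lemma3p4 (a : nat -> C) (f : C -> C) (c : nat -> nat -> C)
  (ha0 : a 0%nat = RtoC 0) (ha1 : a 1%nat = RtoC 1)
  (hf : taylor_on_disc a f) (hc : grunsky_coeffs f c) :
  forall j k : nat, (1 <= k)%nat ->
    c j k =
      (sum_n_m (fun l => RtoC (INR l / INR k) * a (k - l)%nat * c (S j) l) 1 (k - 1)
       - sum_n_m (fun m => a (S m) * c (j - m)%nat k) 1 j
       - a (S (j + k)) / RtoC (INR k))%C.
Proof.
  intros j k Hk. destruct hc as [_ [eps [Heps Hgr]]].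
  destruct k as [| n]; [lia |].
  apply (recursion_of_ode_coef a c n j ha0 ha1).
  apply (ode_coef_zero a f c (Rmin eps 1) ha0 hf); [split; [apply Rmin_pos | apply Rmin_r]; lra |].
  intros z w Hz Hw Hzw. pose proof (Rmin_l eps 1). apply Hgr; [lra | lra | exact Hzw].
Qed.
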